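(* Let $G$ be a two-step nilpotent group and let $a,b,c,d,m,n$ be integers. If $S\colon G^2\to G^2$, $S(x,y)=\bigl(x^ay^b[y,x]^m,\;x^cy^d[y,x]^n\bigr)$, is a solution of the Yang--Baxter equation on $G$, then $\bar S\colon G^2\to G^2$, $\bar S(x,y)=\bigl(x^dy^c[y,x]^{dc-n},\;x^by^a[y,x]^{ab-m}\bigr)$, is also a solution of the Yang--Baxter equation on $G$.
   Context: A two-step nilpotent group is a group of nilpotency class at most $2$ (all commutators central); commutators are $[x,y]=x^{-1}y^{-1}xy$. A map $S\colon X^2\to X^2$ is a solution of the Yang--Baxter equation on $X$ if $S_1S_2S_1=S_2S_1S_2$ on $X^3$, where $S_1=S\times\mathrm{Id}$, $S_2=\mathrm{Id}\times S$. *)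

From Stdlib Require Import ZArith.

Record Group := {
  carrier :> Type;
  gmul : carrier -> carrier -> carrier;
  gone : carrier;
  ginv : carrier -> carrier;
  gmulA : forall x y z, gmul x (gmul y z) = gmul (gmul x y) z;
  gmul1l : forall x, gmul gone x = x;
  gmul1r : forall x, gmul x gone = x;
  gmulVl : forall x, gmul (ginv x) x = gone;
  gmulVr : forall x, gmul x (ginv x) = gone
}.

Arguments gmul {g}.
Arguments gone {g}.
Arguments ginv {g}.

Fixpoint gnpow {G : Group} (x : G) (n : nat) : G :=
  match n with
  | O => gone
  | S k => gmul x (gnpow x k)
  end.

Definition gzpow {G : Group} (x : G) (z : Z) : G :=
  match z with
  | Z0 => gone
  | Zpos p => gnpow x (Pos.to_nat p)
  | Zneg p => ginv (gnpow x (Pos.to_nat p))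
  end.

Definition gcomm {G : Group} (x y : G) : G :=
  gmul (gmul (gmul (ginv x) (ginv y)) x) y.

Definition two_step_nilpotent (G : Group) : Prop :=
  forall x y z : G, gmul (gcomm x y) z = gmul z (gcomm x y).

Definition S1 {X : Type} (S : X * X -> X * X) (t : X * X * X) : X * X * X :=
  let '(x, y, z) := t in let '(u, v) := S (x, y) in (u, v, z).
Definition S2 {X : Type} (S : X * X -> X * X) (t : X * X * X) : X * X * X :=
  let '(x, y, z) := t in let '(v, w) := S (y, z) in (x, v, w).

Definition is_YB_solution {X : Type} (S : X * X -> X * X) : Prop :=
  forall t : X * X * X, S1 S (S2 S (S1 S t)) = S2 S (S1 S (S2 S t)).

Definition Smap {G : Group} (a b c d m n : Z) (p : G * G) : G * G :=
  let '(x, y) := p in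
  (gmul (gmul (gzpow x a) (gzpow y b)) (gzpow (gcomm y x) m),
   gmul (gmul (gzpow x c) (gzpow y d)) (gzpow (gcomm y x) n)).

(* In a group of class two the commutator is bilinear, so moving [x^p] past
   [y^q] costs exactly [[y,x]^(pq)]: [x^p y^q [y,x]^(pq-k) = y^q x^p [x,y]^k].
   Hence the second map is the conjugate of the first by the flip
   [(x,y) |-> (y,x)], and conjugating by the flip preserves the Yang--Baxter
   equation because the reversal [(x,y,z) |-> (z,y,x)] exchanges the roles of
   [S1] and [S2]. *)
From Stdlib Require Import ZArith Lia.

Section Inverses.
Context {G : Group}.
Implicit Types x y z : G.

Lemma mulgK x y : gmul (gmul x y) (ginv y) = x.
Proof. rewrite <- gmulA, gmulVr, gmul1r. reflexivity. Qed.

Lemma mulgKV x y : gmul (gmul x (ginv y)) y = x.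
Proof. rewrite <- gmulA, gmulVl, gmul1r. reflexivity. Qed.

Lemma invg_unique x y : gmul x y = gone -> y = ginv x.
Proof.
  intro Hxy. rewrite <- (gmul1l _ y), <- (gmulVl _ x), <- gmulA, Hxy, gmul1r.
  reflexivity.
Qed.

Lemma invgM x y : ginv (gmul x y) = gmul (ginv y) (ginv x).
Proof. symmetry. apply invg_unique. rewrite !gmulA, mulgK, gmulVr. reflexivity. Qed.

End Inverses.

Ltac gsimpl := repeat progress (rewrite ?invgM, ?gmulA,
  ?mulgK, ?mulgKV, ?gmulVl, ?gmulVr, ?gmul1l, ?gmul1r).

Section Powers.
Context {G : Group}.
Implicit Types x y : G.

Lemma gnpow_commute x k : gmul x (gnpow x k) = gmul (gnpow x k) x.
Proof.
  induction k as [|k IHk]; simpl.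
  - rewrite gmul1l, gmul1r. reflexivity.
  - rewrite <- gmulA, IHk. reflexivity.
Qed.

Lemma gzpowS x k : gzpow x (k + 1) = gmul (gzpow x k) x.
Proof.
  destruct k as [|p|p]; simpl.
  - rewrite gmul1l, gmul1r. reflexivity.
  - replace (Pos.to_nat (p + 1)) with (S (Pos.to_nat p)) by lia.
    apply gnpow_commute.
  - destruct (Pos.eq_dec p 1) as [->|Hp]; simpl.
    + rewrite gmul1r, gmulVl. reflexivity.
    + replace (Z.pos_sub 1 p) with (Z.neg (Pos.pred p))
        by (rewrite Z.pos_sub_lt by lia; f_equal; lia).
      simpl. replace (Pos.to_nat p) with (S (Pos.to_nat (Pos.pred p))) by lia.
      simpl. gsimpl. reflexivity.
Qed.

Lemma gzpowB1 x k : gzpow x (k - 1) = gmul (gzpow x k) (ginv x).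
Proof.
  pose proof (gzpowS x (k - 1)) as Hk. replace (k - 1 + 1)%Z with k in Hk by lia.
  rewrite Hk. gsimpl. reflexivity.
Qed.

Lemma gzpowD x j k : gzpow x (j + k) = gmul (gzpow x j) (gzpow x k).
Proof.
  induction k as [|k IHk|k IHk] using Z.peano_ind.
  - rewrite Z.add_0_r. simpl. rewrite gmul1r. reflexivity.
  - rewrite <- Z.add_1_r, Z.add_assoc, !gzpowS, IHk. gsimpl. reflexivity.
  - rewrite <- Z.sub_1_r, Z.add_sub_assoc, !gzpowB1, IHk. gsimpl. reflexivity.
Qed.

Lemma gzpowN x k : gzpow x (- k) = ginv (gzpow x k).
Proof.
  apply invg_unique. rewrite <- gzpowD. replace (k + - k)%Z with 0%Z by lia.
  reflexivity.
Qed.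

Lemma gzpowM x j k : gzpow x (j * k) = gzpow (gzpow x j) k.
Proof.
  induction k as [|k IHk|k IHk] using Z.peano_ind.
  - rewrite Z.mul_0_r. reflexivity.
  - rewrite <- Z.add_1_r, Z.mul_add_distr_l, Z.mul_1_r, gzpowD, gzpowS, IHk.
    reflexivity.
  - rewrite <- Z.sub_1_r, Z.mul_sub_distr_l, Z.mul_1_r, gzpowB1.
    unfold Z.sub. rewrite gzpowD, gzpowN, IHk. reflexivity.
Qed.

Lemma gzpowV x k : gzpow (ginv x) k = gzpow x (- k).
Proof.
  replace (ginv x) with (gzpow x (-1)) by (simpl; rewrite gmul1r; reflexivity).
  rewrite <- gzpowM. replace (-1 * k)%Z with (- k)%Z by lia. reflexivity.
Qed.

End Powers.

Lemma gmorph_zpow {G H : Group} (f : G -> H)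
    (fM : forall x y, f (gmul x y) = gmul (f x) (f y)) (x : G) (k : Z) :
  f (gzpow x k) = gzpow (f x) k.
Proof.
  assert (f1 : f gone = gone).
  { pose proof (f_equal (fun h => gmul h (ginv (f gone))) (fM gone gone)) as f11.
    simpl in f11. rewrite gmul1r, mulgK, gmulVr in f11. symmetry. exact f11. }
  assert (fV : forall y, f (ginv y) = ginv (f y)).
  { intro y. apply invg_unique. rewrite <- fM, gmulVr. exact f1. }
  induction k as [|k IHk|k IHk] using Z.peano_ind.
  - exact f1.
  - rewrite <- Z.add_1_r, !gzpowS, fM, IHk. reflexivity.
  - rewrite <- Z.sub_1_r, !gzpowB1, fM, fV, IHk. reflexivity.
Qed.

Definition flip_conj {X : Type} (S : X * X -> X * X) (p : X * X) : X * X :=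
  let '(u, v) := S (snd p, fst p) in (v, u).

Section Commutators.
Context {G : Group}.
Implicit Types x y z : G.

Lemma commgC x y : gmul x y = gmul (gmul y x) (gcomm x y).
Proof. unfold gcomm. gsimpl. reflexivity. Qed.

Lemma invg_comm x y : ginv (gcomm x y) = gcomm y x.
Proof. symmetry. apply invg_unique. unfold gcomm. gsimpl. reflexivity. Qed.

Hypothesis nilG : two_step_nilpotent G.

Lemma commMg x y z : gcomm (gmul x y) z = gmul (gcomm x z) (gcomm y z).
Proof.
  transitivity (gmul (gmul (ginv y) (gmul (gcomm x z) y)) (gcomm y z)).
  - unfold gcomm. gsimpl. reflexivity.
  - rewrite nilG. gsimpl. reflexivity.
Qed.

Lemma commgM x y z : gcomm x (gmul y z) = gmul (gcomm x y) (gcomm x z).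
Proof.
  rewrite (nilG x y (gcomm x z)).
  transitivity (gmul (gcomm x z) (gmul (ginv z) (gmul (gcomm x y) z))).
  - unfold gcomm. gsimpl. reflexivity.
  - rewrite (nilG x y z). gsimpl. reflexivity.
Qed.

Lemma comm_zpow x y p q : gcomm (gzpow x p) (gzpow y q) = gzpow (gcomm x y) (p * q).
Proof.
  rewrite (gmorph_zpow (fun u => gcomm u (gzpow y q)) (fun u v => commMg u v _)).
  rewrite (gmorph_zpow (fun v => gcomm x v) (fun u v => commgM x u v)).
  rewrite <- gzpowM, Z.mul_comm. reflexivity.
Qed.

Lemma zpow_swap_comm x y p q k :
  gmul (gmul (gzpow x p) (gzpow y q)) (gzpow (gcomm y x) (p * q - k))
  = gmul (gmul (gzpow y q) (gzpow x p)) (gzpow (gcomm x y) k).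
Proof.
  rewrite (commgC (gzpow x p)), comm_zpow, <- !(invg_comm y x), !gzpowV.
  rewrite <- gmulA, <- gzpowD. f_equal. f_equal. lia.
Qed.

Lemma flip_conj_Smap (a b c d m n : Z) (p : G * G) :
  flip_conj (Smap a b c d m n) p = Smap d c b a (d * c - n)%Z (a * b - m)%Z p.
Proof.
  destruct p as [x y]. unfold flip_conj, Smap. simpl.
  rewrite (Z.mul_comm a b), !zpow_swap_comm. reflexivity.
Qed.

End Commutators.

Definition rev3 {X : Type} (t : X * X * X) : X * X * X :=
  let '(x, y, z) := t in (z, y, x).

Section FlipConjugate.
Context {X : Type} (S : X * X -> X * X).

Lemma rev3K (t : X * X * X) : rev3 (rev3 t) = t.
Proof. destruct t as [[x y] z]. reflexivity. Qed.

Lemma S1_flip_conj_rev3 (t : X * X * X) : S1 (flip_conj S) (rev3 t) = rev3 (S2 S t).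
Proof.
  destruct t as [[x y] z]. unfold S1, S2, flip_conj, rev3. simpl.
  destruct (S (y, z)). reflexivity.
Qed.

Lemma S2_flip_conj_rev3 (t : X * X * X) : S2 (flip_conj S) (rev3 t) = rev3 (S1 S t).
Proof.
  destruct t as [[x y] z]. unfold S1, S2, flip_conj, rev3. simpl.
  destruct (S (x, y)). reflexivity.
Qed.

Lemma is_YB_solution_flip_conj : is_YB_solution S -> is_YB_solution (flip_conj S).
Proof.
  intros YB_S t. rewrite <- (rev3K t).
  rewrite S1_flip_conj_rev3, S2_flip_conj_rev3, S1_flip_conj_rev3.
  rewrite S2_flip_conj_rev3, S1_flip_conj_rev3, S2_flip_conj_rev3.
  rewrite YB_S. reflexivity.
Qed.

Lemma is_YB_solution_ext (S' : X * X -> X * X) :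
  (forall p, S p = S' p) -> is_YB_solution S -> is_YB_solution S'.
Proof.
  intros eqS YB_S t.
  assert (eqS1 : forall u, S1 S' u = S1 S u).
  { intros [[x y] z]. unfold S1. rewrite eqS. reflexivity. }
  assert (eqS2 : forall u, S2 S' u = S2 S u).
  { intros [[x y] z]. unfold S2. rewrite eqS. reflexivity. }
  rewrite !eqS1, !eqS2. apply YB_S.
Qed.

End FlipConjugate.

Theorem corollary5p12 (G : Group) (a b c d m n : Z) :
  two_step_nilpotent G ->
  is_YB_solution (@Smap G a b c d m n) ->
  is_YB_solution (@Smap G d c b a (d * c - n)%Z (a * b - m)%Z).
Proof.
  intros nilG YB_S.
  apply (is_YB_solution_ext _ _ (flip_conj_Smap nilG a b c d m n)).
  exact (is_YB_solution_flip_conj _ YB_S).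
Qed.
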